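(* Assume the setting in the context and the condition $2c_3^2\tau^{1-\theta\alpha}\le c_0\beta^{\alpha}\epsilon$. Then there exist constants $\tilde c_1,\tilde c_2>0$, independent of $\beta,\theta,\tau$ and $\epsilon^{-1}$, such that for all $u,v\in\mathbb{R}$: \[ 2(u+v)f_\tau(u)+\tau\epsilon^{-1}|f_\tau(u)|^2\le-\frac{c_0}{2(1+\beta\tau^{\theta})^{2\alpha}}|u|^2+\tilde c_1(1+|v|^{2q})+\tilde c_2\beta^{\alpha}\tau^{\theta\alpha}, \] \[ |f_\tau(u)|\le|f(u)|,\qquad |f_\tau(u)-f(u)|\le\alpha\beta\tau^{\theta}|u|^{\frac{2q-2}{\alpha}}|f(u)|. \]
   Context: Let $q>1$ be an integer and $f(v)=-c_fv^{2q-1}+f_0(v)$, $v\in\mathbb{R}$, with $c_f>0$ and $f_0$ twice differentiable satisfying $|f_0(v)|\le c_{f,0}(1+|v|^{2q-2})$ and $|f_0'(v)|+|f_0''(v)|\le c_{f,1}(1+|v|^{2q-3})$. Fix constants $c_0,\dots,c_5>0$ such that $(u+v)f(u)\le-c_0|u|^{2q}+c_1|v|^{2q}+c_2$ and $|f(u)|\le c_3|u|^{2q-1}+c_4|u|+c_5$ for all $u,v\in\mathbb{R}$. Let $\epsilon\in(0,1]$, $\tau>0$, $\beta,\theta>0$, $\alpha\in(0,1/\theta)$, and $f_\tau(v):=f(v)/(1+\beta\tau^{\theta}|v|^{(2q-2)/\alpha})^{\alpha}$. *)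

From HB Require Import structures.
From mathcomp Require Import all_boot all_order all_algebra.
From mathcomp Require Import all_classical all_reals all_analysis.
Set Implicit Arguments. Unset Strict Implicit. Unset Printing Implicit Defensive.
Import Order.TTheory GRing.Theory Num.Theory.
Local Open Scope ring_scope.

(* The tamed nonlinearity
   f_tau(v) = f(v) / (1 + beta tau^theta |v|^((2q-2)/alpha))^alpha,
   real powers via MathComp-Analysis [powR] (with 0 `^ x = 0 for x <> 0). *)
Definition ftau (R : realType) (q : nat) (f : R -> R) (alpha beta theta tau : R)
  (v : R) : R :=
  f v / powR (1 + beta * powR tau theta * powR `|v| ((2 * q - 2)%:R / alpha)) alpha.

From HB Require Import structures.
From mathcomp Require Import all_boot all_order all_algebra.
From mathcomp Require Import all_classical all_reals all_analysis.
From mathcomp Require Import ring lra zify.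
Set Implicit Arguments.
Unset Strict Implicit.
Unset Printing Implicit Defensive.
Import Order.TTheory GRing.Theory Num.Theory.
Local Open Scope ring_scope.

(* Write f_tau = f / D with D(u) = (1 + beta tau^theta |u|^((2q-2)/alpha))^alpha >= 1.
   Then |f_tau| <= |f|, and Bernoulli's inequality (1 + x)^(-alpha) >= 1 - alpha x
   bounds f - f_tau.  For the one-sided estimate, divide the dissipativity inequality
   of f by D and bound tau/eps |f_tau|^2 with the growth bound of f: the step-size
   condition turns 2 c3^2 tau/eps into at most c0 K with K = beta^alpha tau^(theta alpha),
   and since K |u|^(2q-2) <= D, the top-order part c0 K |u|^(4q-2)/D^2 is absorbed by
   half of -2 c0 |u|^(2q)/D.  The other half stays coercive, because
   D <= (1 + beta tau^theta)^alpha |u|^(2q-2) when |u| >= 1. *)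

Section PowR.
Variable R : realType.
Implicit Types a b r x : R.

Lemma powR_ge1 b r : 1 <= b -> 0 <= r -> 1 <= b `^ r.
Proof. by move=> b_ge1 r_ge0; rewrite -(powRr0 b) ler_powR. Qed.

Lemma powR_natdivK n a r : 0 <= a -> r != 0 -> (a `^ (n%:R / r)) `^ r = a ^+ n.
Proof. by move=> a_ge0 r_neq0; rewrite -powRrM divfK // powR_mulrn. Qed.

Lemma powR1DN_ge x r : 0 <= x -> 0 < r -> 1 - r * x <= (1 + x) `^ (- r).
Proof.
move=> x_ge0 r_gt0; rewrite /powR gt_eqF; last by lra.
apply: le_trans (expR_ge1Dx _).
have := ler_wpM2l (ltW r_gt0) (le_ln1Dx (x := x) ltac:(lra)); lra.
Qed.

End PowR.

Section Taming.
Variables (R : realType) (m : nat) (alpha y : R).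
Hypotheses (alpha_gt0 : 0 < alpha) (y_ge0 : 0 <= y).

Definition taming (u : R) : R := (1 + y * `|u| `^ (m%:R / alpha)) `^ alpha.

Let shift_ge0 (u : R) : 0 <= y * `|u| `^ (m%:R / alpha).
Proof. by rewrite mulr_ge0 ?powR_ge0. Qed.

Let normr_exprnE (u : R) : `|u| ^+ m = (`|u| `^ (m%:R / alpha)) `^ alpha.
Proof. by rewrite powR_natdivK ?gt_eqF. Qed.

Lemma taming_ge1 (u : R) : 1 <= taming u.
Proof. by rewrite powR_ge1 ?lerDl // ltW. Qed.

Lemma taming_gt0 (u : R) : 0 < taming u.
Proof. exact: lt_le_trans ltr01 (taming_ge1 u). Qed.

Lemma invf_taming_ge (u : R) :
  1 - alpha * (y * `|u| `^ (m%:R / alpha)) <= (taming u)^-1.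
Proof. by rewrite -powRN powR1DN_ge. Qed.

Lemma taming_ge (u : R) : y `^ alpha * `|u| ^+ m <= taming u.
Proof.
rewrite normr_exprnE -powRM ?powR_ge0 //.
apply: ge0_ler_powR; rewrite ?nnegrE ?addr_ge0 ?mulr_ge0 ?powR_ge0 ?lerDl //.
- exact: ltW.
- lra.
Qed.

Lemma taming_le (u : R) : 1 <= `|u| -> taming u <= (1 + y) `^ alpha * `|u| ^+ m.
Proof.
move=> u_ge1; have s_ge1 : 1 <= `|u| `^ (m%:R / alpha).
  by rewrite powR_ge1 // divr_ge0 // ltW.
rewrite normr_exprnE -powRM ?powR_ge0 ?addr_ge0 //.
have s_ge0 := shift_ge0 u.
apply: ge0_ler_powR; rewrite ?nnegrE; [exact: ltW|lra|nra|nra].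
Qed.

End Taming.

Section TamedNonlinearity.
Variables (R : realType) (q : nat) (f : R -> R) (alpha beta theta tau : R).
Hypotheses (alpha_gt0 : 0 < alpha) (beta_ge0 : 0 <= beta).

Let y_ge0 : 0 <= beta * tau `^ theta.
Proof. by rewrite mulr_ge0 ?powR_ge0. Qed.

Lemma ftauE (u : R) : ftau q f alpha beta theta tau u
  = f u / taming (2 * q - 2)%N alpha (beta * tau `^ theta) u.
Proof. by []. Qed.

Lemma normr_ftau_le (u : R) : `|ftau q f alpha beta theta tau u| <= `|f u|.
Proof.
have D_gt0 := taming_gt0 (2 * q - 2) alpha_gt0 y_ge0 u.
rewrite ftauE normrM normfV (gtr0_norm D_gt0) ler_pdivrMr // ler_peMr //.
exact: taming_ge1.
Qed.

Lemma normr_ftau_subr_le (u : R) :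
  `|ftau q f alpha beta theta tau u - f u|
    <= alpha * beta * tau `^ theta * `|u| `^ ((2 * q - 2)%:R / alpha) * `|f u|.
Proof.
have D_ge1 := taming_ge1 (2 * q - 2) alpha_gt0 y_ge0 u.
have := invf_taming_ge (2 * q - 2) alpha_gt0 y_ge0 u.
have : (taming (2 * q - 2)%N alpha (beta * tau `^ theta) u)^-1 <= 1.
  by rewrite invf_le1 // (lt_le_trans ltr01).
rewrite ftauE => Dinv_le1 Dinv_ge.
rewrite -{2}[f u]mulr1 -mulrBr normrM mulrC distrC [`|1 - _|]ger0_norm ?subr_ge0 //.
by rewrite ler_wpM2r //; lra.
Qed.

End TamedNonlinearity.

Lemma step_size_le (R : realType) (c0 c3 alpha beta theta tau eps : R) :
  0 < eps -> 0 < tau ->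
  2 * c3 ^+ 2 * tau `^ (1 - theta * alpha) <= c0 * beta `^ alpha * eps ->
  tau / eps * (2 * c3 ^+ 2) <= c0 * (beta `^ alpha * tau `^ (theta * alpha)).
Proof.
move=> eps_gt0 tau_gt0 step.
have tauE : tau = tau `^ (1 - theta * alpha) * tau `^ (theta * alpha).
  by rewrite -powRD ?subrK ?powRr1 ?ltW // gt_eqF // implybT.
rewrite mulrAC ler_pdivrMr // [in X in X * _ <= _]tauE.
have := ler_wpM2r (powR_ge0 tau (theta * alpha)) step; lra.
Qed.

(* D, K and P play the roles of the taming factor at u, of beta^alpha tau^(theta alpha)
   and of (1 + beta tau^theta)^(2 alpha). *)
Section TamedDissipativity.
Variables (R : realType) (q : nat) (c0 c1 c2 c3 c4 c5 u D K P : R).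
Hypotheses (q_gt1 : (1 < q)%N) (D_ge1 : 1 <= D) (K_ge0 : 0 <= K) (P_ge1 : 1 <= P).
Hypothesis K_le : K * `|u| ^+ (2 * q - 2) <= D.
Hypothesis D_le : 1 <= `|u| -> D <= P * `|u| ^+ (2 * q - 2).

Let D_gt0 : 0 < D. Proof. exact: lt_le_trans ltr01 D_ge1. Qed.

Lemma tamed_top_growth : K * (`|u| ^+ (2 * q - 1)) ^+ 2 <= D * `|u| ^+ (2 * q).
Proof.
have -> : (`|u| ^+ (2 * q - 1)) ^+ 2 = `|u| ^+ (2 * q - 2) * `|u| ^+ (2 * q).
  by rewrite -exprM -exprD; congr (_ ^+ _); lia.
by rewrite mulrA ler_wpM2r ?exprn_ge0.
Qed.

Lemma tamed_linear_growth : K * `|u| ^+ 2 <= K + D.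
Proof.
have [u_le1 | u_gt1] := lerP `|u| 1.
  have := ler_wpM2l K_ge0 (exprn_ile1 2 (normr_ge0 u) u_le1); have := D_gt0; lra.
have : `|u| ^+ 2 <= `|u| ^+ (2 * q - 2) by rewrite ler_eXn2l //; lia.
move=> /(ler_wpM2l K_ge0) lin.
by apply: le_trans lin (le_trans K_le _); rewrite lerDr.
Qed.

Lemma tamed_coercivity : `|u| ^+ 2 / P <= `|u| ^+ (2 * q) / D + 1.
Proof.
have P_gt0 : 0 < P by have := P_ge1; lra.
have A_ge0 : 0 <= `|u| ^+ (2 * q) / D by rewrite divr_ge0 ?exprn_ge0 ?(ltW D_gt0).
have [u_le1 | u_gt1] := lerP `|u| 1.
  suff : `|u| ^+ 2 / P <= 1 by lra.
  by rewrite ler_pdivrMr // mul1r (le_trans _ P_ge1) // exprn_ile1.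
have -> : `|u| ^+ (2 * q) = `|u| ^+ 2 * `|u| ^+ (2 * q - 2).
  by rewrite -exprD; congr (_ ^+ _); lia.
suff : `|u| ^+ 2 / P <= `|u| ^+ 2 * `|u| ^+ (2 * q - 2) / D by lra.
rewrite ler_pdivrMr // mulrAC ler_pdivlMr // -[_ * _ * P]mulrA.
apply: ler_wpM2l; first exact: exprn_ge0.
by rewrite mulrC; apply: D_le; apply: ltW.
Qed.

Hypotheses (c0_ge0 : 0 <= c0) (c3_gt0 : 0 < c3).
Let M := 2 * c0 / c3 ^+ 2.

Let M_ge0 : 0 <= M.
Proof. by rewrite /M divr_ge0 ?sqr_ge0 // mulr_ge0. Qed.

Lemma tamed_square_bound (F T : R) :
  0 <= T -> T * (2 * c3 ^+ 2) <= c0 * K ->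
  `|F| <= c3 * `|u| ^+ (2 * q - 1) + c4 * `|u| + c5 ->
  T * `|F / D| ^+ 2
    <= c0 * (`|u| ^+ (2 * q) / D) + M * c4 ^+ 2 + M * (c4 ^+ 2 + c5 ^+ 2) * K.
Proof.
move=> T_ge0 T_le F_le.
set a := `|u|; set A := a ^+ (2 * q); set B := a ^+ (2 * q - 1).
have F2_le : `|F| ^+ 2 <= 2 * (c3 * B) ^+ 2 + 4 * (c4 * a) ^+ 2 + 4 * c5 ^+ 2.
  have : `|F| ^+ 2 <= (c3 * B + c4 * a + c5) ^+ 2.
    by rewrite ler_sqr ?nnegrE //; apply: le_trans F_le.
  have := sqr_ge0 (c3 * B - (c4 * a + c5)); have := sqr_ge0 (c4 * a - c5); lra.
have TF2_le : T * `|F| ^+ 2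
    <= c0 * (K * B ^+ 2) + M * c4 ^+ 2 * (K * a ^+ 2) + M * c5 ^+ 2 * K.
  have N_ge0 : 0 <= 2 / c3 ^+ 2 by rewrite divr_ge0 ?sqr_ge0.
  set W := B ^+ 2 + 2 / c3 ^+ 2 * (c4 * a) ^+ 2 + 2 / c3 ^+ 2 * c5 ^+ 2.
  have W_ge0 : 0 <= W.
    exact: addr_ge0 (addr_ge0 (sqr_ge0 _) (mulr_ge0 N_ge0 (sqr_ge0 _)))
      (mulr_ge0 N_ge0 (sqr_ge0 _)).
  have -> : c0 * (K * B ^+ 2) + M * c4 ^+ 2 * (K * a ^+ 2) + M * c5 ^+ 2 * K
      = c0 * K * W by rewrite /W /M; ring.
  apply: le_trans (ler_wpM2l T_ge0 F2_le) _.
  have -> : T * (2 * (c3 * B) ^+ 2 + 4 * (c4 * a) ^+ 2 + 4 * c5 ^+ 2)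
      = T * (2 * c3 ^+ 2) * W by rewrite /W; field; rewrite gt_eqF.
  exact: ler_wpM2r.
rewrite normrM normfV (gtr0_norm D_gt0) exprMn exprVn mulrA ler_pdivrMr ?exprn_gt0 //.
have A_top := ler_wpM2l c0_ge0 tamed_top_growth.
have lin := ler_wpM2l (mulr_ge0 M_ge0 (sqr_ge0 c4)) tamed_linear_growth.
have D_D2 : D <= D ^+ 2 by rewrite expr2 ler_peMr ?(ltW D_gt0).
have K_KD2 : K <= K * D ^+ 2 by rewrite ler_peMr // expr2 mulr_ege1.
have -> : (c0 * (A / D) + M * c4 ^+ 2 + M * (c4 ^+ 2 + c5 ^+ 2) * K) * D ^+ 2
    = c0 * (D * A) + M * c4 ^+ 2 * D ^+ 2
      + M * c4 ^+ 2 * (K * D ^+ 2) + M * c5 ^+ 2 * (K * D ^+ 2).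
  by field; rewrite gt_eqF.
have := ler_wpM2l (mulr_ge0 M_ge0 (sqr_ge0 c4)) D_D2.
have := ler_wpM2l (mulr_ge0 M_ge0 (sqr_ge0 c4)) K_KD2.
have := ler_wpM2l (mulr_ge0 M_ge0 (sqr_ge0 c5)) K_KD2.
rewrite -/a -/A -/B in A_top lin; lra.
Qed.

Hypotheses (c1_ge0 : 0 <= c1) (c2_ge0 : 0 <= c2).

Lemma tamed_dissipativity (v F T : R) :
  0 <= T -> T * (2 * c3 ^+ 2) <= c0 * K ->
  (u + v) * F <= - c0 * `|u| ^+ (2 * q) + c1 * `|v| ^+ (2 * q) + c2 ->
  `|F| <= c3 * `|u| ^+ (2 * q - 1) + c4 * `|u| + c5 ->
  2 * (u + v) * (F / D) + T * `|F / D| ^+ 2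
    <= - (c0 / (2 * P)) * `|u| ^+ 2
       + (2 * c1 + 2 * c2 + M * c4 ^+ 2 + c0 / 2) * (1 + `|v| ^+ (2 * q))
       + M * (c4 ^+ 2 + c5 ^+ 2) * K.
Proof.
move=> T_ge0 T_le F_diss F_growth.
have square := tamed_square_bound T_ge0 T_le F_growth.
have coercive := ler_wpM2l (divr_ge0 c0_ge0 (ler0n _ 2)) tamed_coercivity.
have V_ge0 : 0 <= `|v| ^+ (2 * q) by rewrite exprn_ge0.
have X_ge0 : 0 <= c1 * `|v| ^+ (2 * q) + c2 by rewrite addr_ge0 ?mulr_ge0.
have X_div : (c1 * `|v| ^+ (2 * q) + c2) / D <= c1 * `|v| ^+ (2 * q) + c2.
  by rewrite ler_pdivrMr // ler_peMr.
have Dinv_ge0 : 0 <= D^-1 by rewrite invr_ge0 ltW.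
have drift := ler_wpM2r Dinv_ge0 F_diss.
have A_ge0 : 0 <= c0 * (`|u| ^+ (2 * q) / D).
  by rewrite mulr_ge0 // divr_ge0 ?exprn_ge0 ?(ltW D_gt0).
have slack_ge0 : 0 <= (2 * c2 + M * c4 ^+ 2 + c0 / 2) * `|v| ^+ (2 * q).
  exact: mulr_ge0 (addr_ge0 (addr_ge0 (mulr_ge0 (ler0n _ 2) c2_ge0)
    (mulr_ge0 M_ge0 (sqr_ge0 c4))) (divr_ge0 c0_ge0 (ler0n _ 2))) V_ge0.
have -> : c0 / (2 * P) = c0 / 2 / P by rewrite invfM mulrA.
have := c1_ge0; lra.
Qed.

End TamedDissipativity.

Theorem proposition3p2 (R : realType) (q : nat) (cf cf0 cf1 : R) (f0 : R -> R)
  (c0 c1 c2 c3 c4 c5 : R) :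
  (1 < q)%N -> 0 < cf -> 0 < cf0 -> 0 < cf1 ->
  (* f0 twice differentiable *)
  (forall v : R, derivable f0 v 1) ->
  (forall v : R, derivable (derive1 f0) v 1) ->
  (forall v : R, `|f0 v| <= cf0 * (1 + `|v| ^+ (2 * q - 2))) ->
  (forall v : R, `|derive1 f0 v| + `|derive1n 2 f0 v|
                   <= cf1 * (1 + `|v| ^+ (2 * q - 3))) ->
  0 < c0 -> 0 < c1 -> 0 < c2 -> 0 < c3 -> 0 < c4 -> 0 < c5 ->
  let f := fun v : R => - cf * v ^+ (2 * q - 1) + f0 v in
  (forall u v : R, (u + v) * f u <= - c0 * `|u| ^+ (2 * q) + c1 * `|v| ^+ (2 * q) + c2) ->
  (forall u : R, `|f u| <= c3 * `|u| ^+ (2 * q - 1) + c4 * `|u| + c5) ->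
  forall alpha : R, 0 < alpha ->
  exists ct1 ct2 : R, 0 < ct1 /\ 0 < ct2 /\
    forall eps beta theta tau : R,
      0 < eps -> eps <= 1 -> 0 < tau -> 0 < beta -> 0 < theta ->
      alpha < 1 / theta ->
      2 * c3 ^+ 2 * powR tau (1 - theta * alpha) <= c0 * powR beta alpha * eps ->
      forall u v : R,
        [/\ 2 * (u + v) * ftau q f alpha beta theta tau u
              + tau / eps * `|ftau q f alpha beta theta tau u| ^+ 2
            <= - (c0 / (2 * powR (1 + beta * powR tau theta) (2 * alpha))) * `|u| ^+ 2
               + ct1 * (1 + `|v| ^+ (2 * q))
               + ct2 * powR beta alpha * powR tau (theta * alpha),
            `|ftau q f alpha beta theta tau u| <= `|f u| &
            `|ftau q f alpha beta theta tau u - f u|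
              <= alpha * beta * powR tau theta
                 * powR `|u| ((2 * q - 2)%:R / alpha) * `|f u| ].
Proof.
move=> q_gt1 _ _ _ _ _ _ _ c0_gt0 c1_gt0 c2_gt0 c3_gt0 c4_gt0 c5_gt0 f f_diss f_growth
  alpha alpha_gt0.
have M_gt0 : 0 < 2 * c0 / c3 ^+ 2 by rewrite divr_gt0 ?mulr_gt0 ?exprn_gt0.
exists (2 * c1 + 2 * c2 + 2 * c0 / c3 ^+ 2 * c4 ^+ 2 + c0 / 2),
  (2 * c0 / c3 ^+ 2 * (c4 ^+ 2 + c5 ^+ 2)).
split; [|split].
- have := mulr_gt0 M_gt0 (exprn_gt0 2 c4_gt0); lra.
- by rewrite mulr_gt0 // addr_gt0 // exprn_gt0.
move=> eps beta theta tau eps_gt0 _ tau_gt0 beta_gt0 _ _ step u v.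
have beta_ge0 := ltW beta_gt0.
have y_ge0 : 0 <= beta * tau `^ theta by rewrite mulr_ge0 ?powR_ge0.
have yE : (beta * tau `^ theta) `^ alpha = beta `^ alpha * tau `^ (theta * alpha).
  by rewrite powRM ?powR_ge0 // -powRrM.
split; last first.
- exact: normr_ftau_subr_le.
- exact: normr_ftau_le.
rewrite -[_ * beta `^ alpha * _]mulrA ftauE.
apply: tamed_dissipativity => //; try exact: ltW.
- exact: taming_ge1.
- by rewrite mulr_ge0 ?powR_ge0.
- by rewrite powR_ge1 ?lerDl // mulr_ge0 // ltW.
- by rewrite -yE; apply: taming_ge.
- move=> u_ge1; apply: le_trans (taming_le _ alpha_gt0 y_ge0 u_ge1) _.
  by rewrite ler_wpM2r ?exprn_ge0 // ler_powR ?lerDl //; lra.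
- by rewrite divr_ge0 ?ltW.
- exact: step_size_le.
Qed.
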